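(* Let $\mathbb S^1=\{z\in\mathbb C:|z|=1\}$, let $f(z)=z^2$, let $\rho(z)=e^{i\alpha}z$ with $\alpha/2\pi$ irrational, and let $g=\rho\circ f$. Then the IFS $F=\{f,g\}$ on $\mathbb S^1$ has attractor $\mathbb S^1$ (with basin $\mathbb S^1$): $F(\mathbb S^1)=\mathbb S^1$ and $F^{(n)}(K)\to\mathbb S^1$ in the Hausdorff metric for every nonempty compact $K\subseteq\mathbb S^1$. Nevertheless, for every metric $d$ on $\mathbb S^1$ inducing the standard topology, $\mathrm{Lip}(f,d)>1$ and $\mathrm{Lip}(g,d)>1$.
   Context: For a finite IFS $F$ (finite set of continuous self-maps of a metric space $\mathbb X$) and a nonempty compact $K$, $F(K)=\bigcup_{f\in F}f(K)$ and $F^{(n)}$ is its $n$-fold composition. A compact set $A$ is the attractor of $F$ if there is an open $U\supseteq A$ with $F(A)=A$ and $F^{(n)}(K)\to A$ in the Hausdorff metric for every nonempty compact $K\subseteq U$; the largest such $U$ is the basin. $\mathrm{Lip}(f,d)=\sup_{x\neq y} d(f(x),f(y))/d(x,y)$. *)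

From Stdlib Require Import Reals ZArith List.
From Coquelicot Require Import Coquelicot.
Open Scope R_scope.

Definition S1 (z : C) : Prop := Cmod z = 1.

Definition sqmap (z : C) : C := Cmult z z.
Definition rotmap (alpha : R) (z : C) : C := Cmult (cos alpha, sin alpha) z.
Definition gmap (alpha : R) (z : C) : C := rotmap alpha (sqmap z).

Definition img (h : C -> C) (A : C -> Prop) : C -> Prop :=
  fun w => exists z, A z /\ w = h z.
Definition hutch (alpha : R) (A : C -> Prop) : C -> Prop :=
  fun w => img sqmap A w \/ img (gmap alpha) A w.
Definition hutch_iter (alpha : R) (n : nat) (A : C -> Prop) : C -> Prop :=
  Nat.iter n (hutch alpha) A.

Definition openC (U : C -> Prop) : Prop :=
  forall x, U x -> exists eps, 0 < eps /\ forall y, Cmod (Cminus y x) < eps -> U y.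
Definition compactC (K : C -> Prop) : Prop :=
  forall (I : Type) (U : I -> C -> Prop),
    (forall i, openC (U i)) ->
    (forall x, K x -> exists i, U i x) ->
    exists l : list I, forall x, K x -> exists i, In i l /\ U i x.

Definition dist_pt_set (x : C) (B : C -> Prop) : R :=
  real (Glb_Rbar (fun r => exists b, B b /\ r = Cmod (Cminus x b))).
Definition excess (A B : C -> Prop) : R :=
  real (Lub_Rbar (fun r => exists a, A a /\ r = dist_pt_set a B)).
Definition hausdorff_dist (A B : C -> Prop) : R := Rmax (excess A B) (excess B A).

Definition is_metric_on (X : C -> Prop) (d : C -> C -> R) : Prop :=
  (forall x y, X x -> X y -> 0 <= d x y) /\
  (forall x y, X x -> X y -> (d x y = 0 <-> x = y)) /\
  (forall x y, X x -> X y -> d x y = d y x) /\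
  (forall x y z, X x -> X y -> X z -> d x z <= d x y + d y z).

Definition open_in_dist (X : C -> Prop) (d : C -> C -> R) (U : C -> Prop) : Prop :=
  forall x, U x -> exists eps, 0 < eps /\ forall y, X y -> d x y < eps -> U y.
Definition euclid (x y : C) : R := Cmod (Cminus x y).

Definition induces_std_topology (X : C -> Prop) (d : C -> C -> R) : Prop :=
  forall U : C -> Prop, (forall x, U x -> X x) ->
    (open_in_dist X d U <-> open_in_dist X euclid U).

Definition Lip (X : C -> Prop) (h : C -> C) (d : C -> C -> R) : Rbar :=
  Lub_Rbar (fun r => exists x y, X x /\ X y /\ x <> y /\ r = d (h x) (h y) / d x y).

From Stdlib Require Import Reals ZArith List.
From Coquelicot Require Import Coquelicot.
From Stdlib Require Import Lra Lia Classical Rtopology.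
Open Scope R_scope.

(* Both maps double angles (g also rotates by alpha), so F^(n) applied to a point cis t contains
   cis (2^n t + m alpha) for every m < 2^n.  By Dirichlet's approximation theorem some multiple of
   the irrational rotation is a rotation by less than eps, so the first M points of every rotation
   orbit are eps-dense; hence F^(n)(K) is eps-dense as soon as 2^n > M.

   For the Lipschitz bounds: f and g are even and onto.  If Lip(h, d) <= 1, pull a delta-separated
   family back along h, replacing each point by both of its preimages u and -u, where delta bounds
   d(z, -z) from below by compactness.  This doubles the family at each step, while a finite cover
   of the circle by d-balls of radius delta/2 bounds the size of any delta-separated family. *)

Definition cis (t : R) : C := (cos t, sin t).

Lemma Rabs_sin_le x : Rabs (sin x) <= Rabs x.
Proof.
  assert (Hpos : forall y, 0 <= y -> Rabs (sin y) <= y).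
  { intros y Hy. destruct (Req_dec y 0) as [->|Hy0].
    - rewrite sin_0, Rabs_R0. lra.
    - pose proof (sin_lt_x y ltac:(lra)). pose proof (SIN_bound y). pose proof PI2_1.
      destruct (Rlt_or_le y 1).
      + pose proof (sin_gt_0 y ltac:(lra) ltac:(lra)). rewrite Rabs_pos_eq; lra.
      + apply Rabs_le; lra. }
  destruct (Rle_or_lt 0 x).
  - rewrite (Rabs_pos_eq x) by lra. auto.
  - rewrite <- Rabs_Ropp, <- sin_neg, (Rabs_left x) by lra. apply Hpos. lra.
Qed.

Lemma Cmod_sqr (z : C) : Cmod z ^ 2 = fst z ^ 2 + snd z ^ 2.
Proof. unfold Cmod. rewrite pow2_sqrt; [reflexivity|nra]. Qed.

Lemma S1_iff (z : C) : S1 z <-> fst z ^ 2 + snd z ^ 2 = 1.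
Proof.
  unfold S1; split; intro H.
  - rewrite <- Cmod_sqr, H; ring.
  - unfold Cmod; rewrite H; apply sqrt_1.
Qed.

Lemma S1_cis t : S1 (cis t).
Proof. apply S1_iff; simpl. pose proof (sin2_cos2 t) as H. unfold Rsqr in H. nra. Qed.

Lemma S1_opp z : S1 z -> S1 (Copp z).
Proof. rewrite !S1_iff. simpl. nra. Qed.

Lemma S1_neq_opp z : S1 z -> z <> Copp z.
Proof.
  rewrite S1_iff. destruct z as [x y]. intros H E. injection E. simpl in H. nra.
Qed.

Lemma sqmap_cis t : sqmap (cis t) = cis (2 * t).
Proof. unfold sqmap, cis, Cmult; simpl. rewrite cos_2a, sin_2a. f_equal; ring. Qed.

Lemma gmap_cis a t : gmap a (cis t) = cis (a + 2 * t).
Proof.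
  unfold gmap, rotmap. rewrite sqmap_cis. unfold cis, Cmult; simpl.
  rewrite cos_plus, sin_plus. f_equal; ring.
Qed.

Lemma cis_periodZ t (k : Z) : cis (t + 2 * IZR k * PI) = cis t.
Proof.
  assert (Hnat : forall u (n : nat), cis (u + 2 * INR n * PI) = cis u).
  { intros u n. unfold cis. rewrite cos_period, sin_period. reflexivity. }
  destruct (Z.le_ge_cases 0 k) as [Hk|Hk].
  - rewrite <- (Z2Nat.id k Hk), <- INR_IZR_INZ. apply Hnat.
  - rewrite <- (Hnat _ (Z.to_nat (- k))), INR_IZR_INZ, Z2Nat.id, opp_IZR by lia.
    f_equal. ring.
Qed.

Lemma S1_polar (z : C) : S1 z -> exists t, - PI <= t <= PI /\ z = cis t.
Proof.
  rewrite S1_iff. destruct z as [x y]; simpl. intro H.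
  pose proof (acos_bound x).
  assert (Hx : -1 <= x <= 1) by nra.
  assert (Hs : sqrt (1 - x²) = Rabs y).
  { rewrite <- sqrt_Rsqr_abs. f_equal. unfold Rsqr. nra. }
  destruct (Rle_or_lt 0 y) as [Hy|Hy].
  - exists (acos x). split; [pose proof PI_RGT_0; lra|]. unfold cis. rewrite cos_acos, sin_acos by lra.
    rewrite Hs, Rabs_pos_eq by lra. reflexivity.
  - exists (- acos x). split; [lra|]. unfold cis. rewrite cos_neg, sin_neg, cos_acos, sin_acos by lra.
    rewrite Hs, Rabs_left by lra. f_equal; ring.
Qed.

Lemma Cmod_cis_sub_le a b : Cmod (Cminus (cis a) (cis b)) <= Rabs (a - b).
Proof.
  set (s := (a - b) / 2).
  assert (Hsq : Cmod (Cminus (cis a) (cis b)) ^ 2 = 4 * sin s ^ 2).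
  { rewrite Cmod_sqr. unfold Cminus, Cplus, Copp, cis; simpl.
    pose proof (cos_2a_sin s) as Hc.
    replace (2 * s) with (a + - b) in Hc by (unfold s; field).
    rewrite cos_plus, cos_neg, sin_neg in Hc.
    pose proof (sin2_cos2 a); pose proof (sin2_cos2 b). unfold Rsqr in *. nra. }
  assert (Hab : Rabs (a - b) = 2 * Rabs s).
  { replace (a - b) with (2 * s) by (unfold s; field).
    rewrite Rabs_mult, Rabs_pos_eq by lra. reflexivity. }
  apply Rsqr_incr_0_var; [|apply Rabs_pos]. unfold Rsqr.
  rewrite <- (pow2_abs (sin s)) in Hsq.
  pose proof (Rabs_sin_le s). pose proof (Rabs_pos (sin s)). rewrite Hab. simpl in Hsq. nra.
Qed.

Lemma sqmap_opp z : sqmap (Copp z) = sqmap z.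
Proof. unfold sqmap, Copp, Cmult; simpl. f_equal; ring. Qed.

Lemma gmap_opp a z : gmap a (Copp z) = gmap a z.
Proof. unfold gmap. rewrite sqmap_opp. reflexivity. Qed.

Lemma sqmap_S1 z : S1 z -> S1 (sqmap z).
Proof. intro Hz. destruct (S1_polar z Hz) as [t [_ ->]]. rewrite sqmap_cis. apply S1_cis. Qed.

Lemma gmap_S1 a z : S1 z -> S1 (gmap a z).
Proof. intro Hz. destruct (S1_polar z Hz) as [t [_ ->]]. rewrite gmap_cis. apply S1_cis. Qed.

Lemma sqmap_surj w : S1 w -> exists u, S1 u /\ sqmap u = w.
Proof.
  intro Hw. destruct (S1_polar w Hw) as [t [_ ->]]. exists (cis (t / 2)).
  split; [apply S1_cis|]. rewrite sqmap_cis. f_equal. field.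
Qed.

Lemma gmap_surj a w : S1 w -> exists u, S1 u /\ gmap a u = w.
Proof.
  intro Hw. destruct (S1_polar w Hw) as [t [_ ->]]. exists (cis ((t - a) / 2)).
  split; [apply S1_cis|]. rewrite gmap_cis. f_equal. field.
Qed.

Lemma hutch_sub_S1 a (A : C -> Prop) :
  (forall z, A z -> S1 z) -> forall z, hutch a A z -> S1 z.
Proof.
  intros HA z [[w [Hw ->]]|[w [Hw ->]]]; [apply sqmap_S1|apply gmap_S1]; auto.
Qed.

Lemma hutch_S1 a z : hutch a S1 z <-> S1 z.
Proof.
  split; [apply hutch_sub_S1; auto|].
  intro H. destruct (sqmap_surj z H) as [u [Hu <-]]. left. exists u. auto.
Qed.

Lemma hutch_iter_sub_S1 a K :
  (forall z, K z -> S1 z) -> forall n z, hutch_iter a n K z -> S1 z.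
Proof.
  intros HK n; induction n as [|n IH]; [exact HK|].
  apply hutch_sub_S1, IH.
Qed.

(* The binary digits of m record which of f, g was applied at each step. *)
Lemma hutch_iter_cis a K t : K (cis t) ->
  forall n m, (m < 2 ^ n)%nat -> hutch_iter a n K (cis (2 ^ n * t + INR m * a)).
Proof.
  intros HK n; induction n as [|n IH]; intros m Hm.
  - simpl in Hm. replace m with 0%nat by lia. simpl.
    replace (1 * t + 0 * a) with t by ring. exact HK.
  - simpl. destruct (Nat.Even_or_Odd m) as [[k ->]|[k ->]];
      assert (Hk : (k < 2 ^ n)%nat) by (simpl in Hm; lia).
    + left. exists (cis (2 ^ n * t + INR k * a)). split; [apply IH, Hk|].
      rewrite sqmap_cis, mult_INR. f_equal. simpl. ring.
    + right. exists (cis (2 ^ n * t + INR k * a)). split; [apply IH, Hk|].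
      rewrite gmap_cis, plus_INR, mult_INR. f_equal. simpl. ring.
Qed.

Lemma real_le_between (g : Rbar) (x y : R) :
  Rbar_le x g -> Rbar_le g y -> x <= real g <= y.
Proof. destruct g; simpl; tauto. Qed.

Lemma dist_pt_set_bounds s (A : C -> Prop) a :
  A a -> 0 <= dist_pt_set s A <= Cmod (Cminus s a).
Proof.
  intro Ha. unfold dist_pt_set.
  destruct (Glb_Rbar_correct (fun r => exists b, A b /\ r = Cmod (Cminus s b))) as [Hlb Hglb].
  apply real_le_between.
  - apply Hglb. intros r [b [_ ->]]. apply Cmod_ge_0.
  - apply Hlb. exists a. auto.
Qed.

Lemma dist_pt_set_in (A : C -> Prop) a : A a -> dist_pt_set a A = 0.
Proof.
  intro Ha. pose proof (dist_pt_set_bounds a A a Ha) as H.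
  unfold Cminus in H. rewrite Cplus_opp_r, Cmod_0 in H. lra.
Qed.

Lemma hausdorff_dist_S1_lt (A : C -> Prop) eps :
  0 < eps -> (forall z, A z -> S1 z) -> (exists z, A z) ->
  (forall s, S1 s -> exists a, A a /\ Cmod (Cminus s a) < eps / 2) ->
  hausdorff_dist A S1 < eps.
Proof.
  intros He HA [z0 Hz0] Hnet. unfold hausdorff_dist, excess.
  assert (Hexc1 : 0 <= real (Lub_Rbar (fun r => exists a, A a /\ r = dist_pt_set a S1)) <= 0).
  { destruct (Lub_Rbar_correct (fun r => exists a, A a /\ r = dist_pt_set a S1)) as [Hub Hlub].
    apply real_le_between.
    - apply Hub. exists z0. rewrite dist_pt_set_in; auto.
    - apply Hlub. intros r [a [Ha ->]]. rewrite dist_pt_set_in; auto. apply Rle_refl. }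
  assert (Hexc2 : 0 <= real (Lub_Rbar (fun r => exists a, S1 a /\ r = dist_pt_set a A)) <= eps / 2).
  { destruct (Lub_Rbar_correct (fun r => exists a, S1 a /\ r = dist_pt_set a A)) as [Hub Hlub].
    apply real_le_between.
    - destruct (Hnet (cis 0) (S1_cis 0)) as [a [Ha _]].
      apply Rbar_le_trans with (Finite (dist_pt_set (cis 0) A)).
      + apply (dist_pt_set_bounds _ _ _ Ha).
      + apply Hub. exists (cis 0). split; [apply S1_cis|reflexivity].
    - apply Hlub. intros r [s [Hs ->]]. destruct (Hnet s Hs) as [a [Ha Hsa]].
      pose proof (dist_pt_set_bounds s A a Ha). simpl. lra. }
  apply Rmax_lub_lt; lra.
Qed.

Lemma pigeonhole N (f : nat -> nat) : (forall m, (m <= N)%nat -> (f m < N)%nat) ->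
  exists i j, (i < j <= N)%nat /\ f i = f j.
Proof.
  revert f. induction N as [|N IH]; intros f Hf.
  - specialize (Hf 0%nat (le_n _)). lia.
  - destruct (classic (exists i, (i <= N)%nat /\ f i = f (S N))) as [[i [Hi E]]|Hnone].
    + exists i, (S N). split; [lia|exact E].
    + assert (Hne : forall m, (m <= N)%nat -> f m <> f (S N)).
      { intros m Hm E. apply Hnone. exists m. auto. }
      (* squeeze the value f (S N) out of the range [0, S N) *)
      set (g m := if Nat.ltb (f m) (f (S N)) then f m else (f m - 1)%nat).
      destruct (IH g) as [i [j [Hij E]]].
      * intros m Hm. unfold g. pose proof (Hf m ltac:(lia)). pose proof (Hf (S N) (le_n _)).
        pose proof (Hne m Hm). destruct (Nat.ltb_spec (f m) (f (S N))); lia.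
      * exists i, j. split; [lia|]. unfold g in E.
        pose proof (Hne i ltac:(lia)). pose proof (Hne j ltac:(lia)).
        destruct (Nat.ltb_spec (f i) (f (S N))), (Nat.ltb_spec (f j) (f (S N))); lia.
Qed.

Definition irrational (x : R) : Prop := forall p q : Z, q <> 0%Z -> x <> IZR p / IZR q.

Lemma dirichlet_approx x : irrational x ->
  forall N : nat, (0 < N)%nat -> exists (q : nat) (k : Z),
    (0 < q)%nat /\ 0 < Rabs (INR q * x - IZR k) < 1 / INR N.
Proof.
  intros Hx N HN.
  assert (HNr : 0 < INR N) by (apply lt_0_INR; lia).
  set (box m := Int_part (INR N * frac_part (INR m * x))).
  assert (Hbox : forall m, 0 <= IZR (box m) <= INR N * frac_part (INR m * x) /\
     INR N * frac_part (INR m * x) < IZR (box m) + 1 /\ (0 <= box m < Z.of_nat N)%Z).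
  { intro m. pose proof (base_fp (INR m * x)). pose proof (base_Int_part (INR N * frac_part (INR m * x))).
    fold (box m) in *.
    assert (H1 : -1 < IZR (box m)) by nra.
    assert (H2 : IZR (box m) < IZR (Z.of_nat N)) by (rewrite <- INR_IZR_INZ; nra).
    apply lt_IZR in H1. apply lt_IZR in H2.
    assert (0 <= IZR (box m)) by (apply IZR_le; lia).
    repeat split; try lra; lia. }
  destruct (pigeonhole N (fun m => Z.to_nat (box m))) as [i [j [Hij E]]].
  { intros m _. destruct (Hbox m) as [_ [_ Hb]]. lia. }
  destruct (Hbox i) as [Bi1 [Bi2 Bi3]]. destruct (Hbox j) as [Bj1 [Bj2 Bj3]].
  apply Z2Nat.inj in E; try lia. rewrite E in Bi1, Bi2.
  exists (j - i)%nat, (Int_part (INR j * x) - Int_part (INR i * x))%Z. split; [lia|].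
  assert (Heq : INR (j - i) * x - IZR (Int_part (INR j * x) - Int_part (INR i * x))
                = frac_part (INR j * x) - frac_part (INR i * x)).
  { rewrite minus_INR, minus_IZR by lia. unfold frac_part. ring. }
  rewrite Heq. split.
  - apply Rabs_pos_lt. rewrite <- Heq. intro H0.
    apply (Hx (Int_part (INR j * x) - Int_part (INR i * x))%Z (Z.of_nat (j - i))); [lia|].
    rewrite <- INR_IZR_INZ.
    assert (0 < INR (j - i)) by (apply lt_0_INR; lia).
    apply (Rmult_eq_reg_r (INR (j - i))); [field_simplify; lra | lra].
  - apply Rmult_lt_reg_l with (INR N); [lra|].
    replace (INR N * (1 / INR N)) with 1 by (field; lra).
    rewrite <- (Rabs_pos_eq (INR N)) at 1 by lra. rewrite <- Rabs_mult.
    apply Rabs_def1; nra.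
Qed.

Lemma irrational_rotation_small_step alpha : irrational (alpha / (2 * PI)) ->
  forall eps, 0 < eps -> exists (q : nat) (k : Z) (beta : R),
    0 < Rabs beta < eps /\ INR q * alpha = beta + 2 * IZR k * PI.
Proof.
  intros Hirr eps He. pose proof PI_RGT_0 as Hpi.
  destruct (archimed (2 * PI / eps)) as [Hup _].
  assert (Hdiv : 0 < 2 * PI / eps) by (apply Rdiv_lt_0_compat; lra).
  assert (Hup0 : (0 < up (2 * PI / eps))%Z) by (apply lt_IZR; lra).
  set (N := Z.to_nat (up (2 * PI / eps))).
  assert (HN : 2 * PI / eps < INR N) by (unfold N; rewrite INR_IZR_INZ, Z2Nat.id; lia || lra).
  destruct (dirichlet_approx _ Hirr N ltac:(unfold N; lia)) as [q [k [_ [Hpos Hsmall]]]].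
  exists q, k, (INR q * alpha - 2 * IZR k * PI). split; [|ring].
  replace (INR q * alpha - 2 * IZR k * PI)
    with (2 * PI * (INR q * (alpha / (2 * PI)) - IZR k)) by (field; lra).
  rewrite Rabs_mult, (Rabs_pos_eq (2 * PI)) by lra. split; [nra|].
  assert (HNpos : 0 < INR N) by lra.
  assert (Heps : 2 * PI < eps * INR N).
  { apply (Rmult_lt_compat_l eps) in HN; [|lra].
    replace (eps * (2 * PI / eps)) with (2 * PI) in HN by (field; lra). lra. }
  apply (Rmult_lt_compat_r (INR N)) in Hsmall; [|lra].
  replace (1 / INR N * INR N) with 1 in Hsmall by (field; lra). nra.
Qed.

Lemma multiples_cover b : b <> 0 -> exists J : nat, forall v, exists (j : nat) (k : Z),
  (j <= J)%nat /\ Rabs (v + 2 * IZR k * PI - INR j * b) < Rabs b.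
Proof.
  intro Hb0. pose proof PI_RGT_0 as Hpi.
  assert (Hpos : forall b, 0 < b -> exists J : nat, forall v, exists (j : nat) (k : Z),
    (j <= J)%nat /\ Rabs (v + 2 * IZR k * PI - INR j * b) < b).
  { clear b Hb0. intros b Hb. exists (Z.to_nat (up (2 * PI / b))). intro v.
    set (k := (- Int_part (v / (2 * PI)))%Z).
    set (w := v + 2 * IZR k * PI).
    assert (Hw : 0 <= w < 2 * PI).
    { unfold w, k. rewrite opp_IZR. pose proof (base_Int_part (v / (2 * PI))).
      assert (v = 2 * PI * (v / (2 * PI))) by (field; lra).
      set (y := v / (2 * PI)) in *. set (z := IZR (Int_part y)) in *. nra. }
    set (j := Int_part (w / b)).
    pose proof (base_Int_part (w / b)) as Hj. fold j in Hj.
    assert (Hwb : 0 <= w / b < 2 * PI / b).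
    { split; [apply Rdiv_le_0_compat; lra|apply Rmult_lt_compat_r; [apply Rinv_0_lt_compat|]; lra]. }
    assert (Hj0 : (0 <= j)%Z).
    { assert (Hlt : IZR (-1) < IZR j) by lra. apply lt_IZR in Hlt. lia. }
    exists (Z.to_nat j), k. split.
    - pose proof (archimed (2 * PI / b)) as [Hu _].
      assert (IZR j < IZR (up (2 * PI / b))) as Hlt by lra. apply lt_IZR in Hlt. lia.
    - rewrite INR_IZR_INZ, Z2Nat.id by lia. fold w.
      assert (w = b * (w / b)) by (field; lra).
      apply Rabs_def1; nra. }
  destruct (Rle_or_lt 0 b) as [Hb|Hb].
  - rewrite Rabs_pos_eq by lra. apply Hpos. lra.
  - destruct (Hpos (- b) ltac:(lra)) as [J HJ]. exists J. intro v.
    destruct (HJ (- v)) as [j [k [Hj Hk]]]. exists j, (- k)%Z. split; [exact Hj|].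
    rewrite (Rabs_left b), opp_IZR, <- Rabs_Ropp by lra.
    replace (- (v + 2 * - IZR k * PI - INR j * b)) with (- v + 2 * IZR k * PI - INR j * - b) by ring.
    exact Hk.
Qed.

Lemma rotation_orbit_dense alpha : irrational (alpha / (2 * PI)) ->
  forall eps, 0 < eps -> exists M : nat, forall t u, exists m : nat,
    (m < M)%nat /\ Cmod (Cminus (cis u) (cis (t + INR m * alpha))) < eps.
Proof.
  intros Hirr eps He.
  destruct (irrational_rotation_small_step alpha Hirr eps He) as [q [k [beta [[Hb0 Hbeps] Hq]]]].
  destruct (multiples_cover beta ltac:(intro; subst; rewrite Rabs_R0 in Hb0; lra)) as [J HJ].
  exists (S (q * J)). intros t u.
  destruct (HJ (u - t)) as [j [k' [Hj Hjk]]].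
  exists (q * j)%nat. split; [apply Nat.lt_succ_r, Nat.mul_le_mono_l, Hj|].
  assert (Horbit : t + INR (q * j) * alpha = t + INR j * beta + 2 * IZR (Z.of_nat j * k) * PI).
  { rewrite mult_INR, mult_IZR, <- INR_IZR_INZ.
    replace (INR q * INR j * alpha) with (INR j * (INR q * alpha)) by ring. rewrite Hq. ring. }
  rewrite Horbit, cis_periodZ, <- (cis_periodZ u k').
  eapply Rle_lt_trans; [apply Cmod_cis_sub_le|].
  replace (u + 2 * IZR k' * PI - (t + INR j * beta)) with (u - t + 2 * IZR k' * PI - INR j * beta) by ring.
  lra.
Qed.

Lemma hutch_iter_converges alpha : irrational (alpha / (2 * PI)) ->
  forall K : C -> Prop, (forall z, K z -> S1 z) -> (exists z, K z) ->
  forall eps, 0 < eps -> exists N : nat, forall n, (N <= n)%nat ->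
    hausdorff_dist (hutch_iter alpha n K) S1 < eps.
Proof.
  intros Hirr K HK [z0 Hz0] eps He.
  destruct (S1_polar z0 (HK z0 Hz0)) as [t0 [_ ->]].
  destruct (rotation_orbit_dense alpha Hirr (eps / 2) ltac:(lra)) as [M HM].
  exists M. intros n Hn.
  assert (HMn : (M < 2 ^ n)%nat).
  { pose proof (Nat.pow_gt_lin_r 2 M ltac:(lia)). pose proof (Nat.pow_le_mono_r 2 M n ltac:(lia) Hn). lia. }
  apply hausdorff_dist_S1_lt; auto.
  - apply hutch_iter_sub_S1, HK.
  - exists (cis (2 ^ n * t0 + INR 0 * alpha)). apply hutch_iter_cis; auto. lia.
  - intros s Hs. destruct (S1_polar s Hs) as [u [_ ->]].
    destruct (HM (2 ^ n * t0) u) as [m [Hm Hd]].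
    exists (cis (2 ^ n * t0 + INR m * alpha)). split; auto. apply hutch_iter_cis; auto. lia.
Qed.

Lemma Cmod_sub_comm a b : Cmod (Cminus a b) = Cmod (Cminus b a).
Proof. unfold Cmod, Cminus, Cplus, Copp; simpl. f_equal. ring. Qed.

Lemma Cmod_sub_triangle a b c : Cmod (Cminus a c) <= Cmod (Cminus a b) + Cmod (Cminus b c).
Proof.
  replace (Cminus a c) with (Cplus (Cminus a b) (Cminus b c)); [apply Cmod_triangle|].
  unfold Cminus, Cplus, Copp; simpl. f_equal; ring.
Qed.

(* Compactness of S^1, via the Heine-Borel lemma [compact_P3] on [-PI, PI]. *)
Lemma S1_finite_cover (P : C -> C -> Prop) :
  (forall w, S1 w -> exists eta, 0 < eta /\ forall z, S1 z -> Cmod (Cminus z w) < eta -> P w z) ->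
  exists l : list C, (forall w, In w l -> S1 w) /\ forall z, S1 z -> exists w, In w l /\ P w z.
Proof.
  intro HP.
  set (ball t y := - PI <= t <= PI /\ exists eta, 0 < eta /\
     (forall z, S1 z -> Cmod (Cminus z (cis t)) < eta -> P (cis t) z) /\
     Cmod (Cminus (cis y) (cis t)) < eta).
  assert (Hind : forall t, (exists y, ball t y) -> - PI <= t <= PI).
  { intros t [y [Ht _]]. exact Ht. }
  destruct (compact_P3 (- PI) PI (mkfamily _ ball Hind)) as [D [Hcov [l Hl]]].
  - split.
    + intros y Hy. exists y. split; [exact Hy|].
      destruct (HP (cis y) (S1_cis y)) as [eta [Heta H]]. exists eta.
      unfold Cminus. rewrite Cplus_opp_r, Cmod_0. auto.
    + intros t y [Ht [eta [Heta [H Hy]]]].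
      exists (mkposreal (eta - Cmod (Cminus (cis y) (cis t))) ltac:(lra)).
      intros y' Hy'. unfold disc in Hy'; simpl in Hy'. split; [exact Ht|]. exists eta.
      pose proof (Cmod_sub_triangle (cis y') (cis y) (cis t)).
      pose proof (Cmod_cis_sub_le y' y). repeat split; auto. lra.
  - exists (map cis l). split.
    + intros w Hw. apply in_map_iff in Hw as [t [<- _]]. apply S1_cis.
    + intros z Hz. destruct (S1_polar z Hz) as [y [Hy ->]].
      destruct (Hcov y Hy) as [t [[Ht [eta [Heta [H Hyt]]]] Dt]].
      exists (cis t). split; [apply in_map, Hl; split; auto|]. apply H; auto.
Qed.

Lemma list_pos_lower_bound (F : C -> R) (l : list C) : (forall w, In w l -> 0 < F w) ->
  exists delta, 0 < delta /\ forall w, In w l -> delta <= F w.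
Proof.
  induction l as [|a l IH]; intro H.
  - exists 1. split; [lra|]. intros w [].
  - destruct IH as [dl [Hdl Hl]]; [intros w Hw; apply H; right; auto|].
    exists (Rmin (F a) dl). split; [apply Rmin_pos; auto; apply H; left; auto|].
    intros w [<-|Hw]; [apply Rmin_l|]. eapply Rle_trans; [apply Rmin_r|auto].
Qed.

Section EquivalentMetric.
Variable d : C -> C -> R.
Hypothesis Hmet : is_metric_on S1 d.
Hypothesis Htop : induces_std_topology S1 d.

Lemma dist_pos x y : S1 x -> S1 y -> x <> y -> 0 < d x y.
Proof.
  intros Hx Hy Hxy. destruct Hmet as [Hpos [Hzero _]].
  destruct (Hpos x y Hx Hy) as [|E]; auto. symmetry in E. apply Hzero in E; auto. contradiction.
Qed.

Lemma dist_small_near x r : S1 x -> 0 < r ->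
  exists eta, 0 < eta /\ forall y, S1 y -> Cmod (Cminus y x) < eta -> d x y < r.
Proof.
  destruct Hmet as [_ [Hzero [_ Htri]]]. intros Hx Hr.
  set (U := fun y => S1 y /\ d x y < r).
  assert (HU : open_in_dist S1 d U).
  { intros y [Hy Hyr]. exists (r - d x y). split; [lra|].
    intros z Hz Hyz. split; auto. pose proof (Htri x y z Hx Hy Hz). lra. }
  apply (Htop U (fun y H => proj1 H)) in HU.
  destruct (HU x) as [eta [Heta H]].
  { split; auto. assert (d x x = 0) by (apply Hzero; auto). lra. }
  exists eta. split; auto. intros y Hy Hyx. apply H; auto. unfold euclid. rewrite Cmod_sub_comm. exact Hyx.
Qed.

Lemma antipodal_dist_lower_bound : exists delta, 0 < delta /\ forall z, S1 z -> delta < d z (Copp z).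
Proof.
  destruct Hmet as [_ [_ [Hsym Htri]]].
  destruct (S1_finite_cover (fun w z => d w (Copp w) / 3 < d z (Copp z))) as [l [Hl Hcov]].
  - intros w Hw. set (a := d w (Copp w)).
    assert (Ha : 0 < a) by (apply dist_pos; auto using S1_opp, S1_neq_opp).
    destruct (dist_small_near w (a / 3) Hw ltac:(lra)) as [e1 [He1 H1]].
    destruct (dist_small_near (Copp w) (a / 3) (S1_opp w Hw) ltac:(lra)) as [e2 [He2 H2]].
    exists (Rmin e1 e2). split; [apply Rmin_pos; auto|]. intros z Hz Hzw.
    assert (Hwz : d w z < a / 3) by (apply H1; auto; eapply Rlt_le_trans; [exact Hzw|apply Rmin_l]).
    assert (Hwz' : d (Copp w) (Copp z) < a / 3).
    { apply H2; [apply S1_opp; auto|].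
      replace (Cminus (Copp z) (Copp w)) with (Copp (Cminus z w))
        by (unfold Cminus, Cplus, Copp; simpl; f_equal; ring).
      rewrite Cmod_opp. eapply Rlt_le_trans; [exact Hzw|apply Rmin_r]. }
    pose proof (S1_opp w Hw) as Hw'. pose proof (S1_opp z Hz) as Hz'.
    pose proof (Htri w z (Copp w) Hw Hz Hw') as Htri1.
    pose proof (Htri z (Copp z) (Copp w) Hz Hz' Hw') as Htri2.
    rewrite (Hsym (Copp z) (Copp w)) in Htri2 by auto. fold a in Htri1. lra.
  - destruct (list_pos_lower_bound (fun w => d w (Copp w) / 3) l) as [delta [Hd Hdl]].
    + intros w Hw. assert (0 < d w (Copp w)) by (apply dist_pos; auto using S1_opp, S1_neq_opp). lra.
    + exists delta. split; auto. intros z Hz. destruct (Hcov z Hz) as [w [Hw Hwz]].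
      specialize (Hdl w Hw). simpl in Hdl. lra.
Qed.
End EquivalentMetric.

Lemma Lip_le_1_nonexpanding h d : is_metric_on S1 d -> (forall z, S1 z -> S1 (h z)) ->
  Rbar_le (Lip S1 h d) 1 -> forall x y, S1 x -> S1 y -> d (h x) (h y) <= d x y.
Proof.
  intros Hmet Hh HLip x y Hx Hy. pose proof Hmet as [_ [Hzero _]].
  destruct (classic (x = y)) as [->|Hne].
  - assert (d (h y) (h y) = 0) by (apply Hzero; auto).
    assert (d y y = 0) by (apply Hzero; auto). lra.
  - assert (Hq : Rbar_le (d (h x) (h y) / d x y) 1).
    { eapply Rbar_le_trans; [|exact HLip]. apply (proj1 (Lub_Rbar_correct _)). exists x, y. auto. }
    pose proof (dist_pos d Hmet x y Hx Hy Hne) as Hd. simpl in Hq.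
    apply (Rmult_le_compat_r (d x y)) in Hq; [|lra].
    unfold Rdiv in Hq. rewrite Rmult_assoc, Rinv_l in Hq by lra. lra.
Qed.

Section TwoToOneNonexpanding.
Variable h : C -> C.
Variable d : C -> C -> R.
Hypothesis Hmet : is_metric_on S1 d.
Hypothesis Heven : forall z, h (Copp z) = h z.
Hypothesis Hsurj : forall w, S1 w -> exists u, S1 u /\ h u = w.
Hypothesis Hnonexp : forall x y, S1 x -> S1 y -> d (h x) (h y) <= d x y.
Variable delta : R.
Hypothesis Hantipodal : forall z, S1 z -> delta < d z (Copp z).

Definition separated (T : list C) : Prop := ForallOrdPairs (fun x y => delta <= d x y) T.

(* Replace each point of T by both of its h-preimages u and -u: these are delta-apart by the choice
   of delta, and apart from the other new points because h does not expand distances. *)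
Lemma separated_preimages (T : list C) : List.Forall S1 T -> separated T ->
  exists T', List.Forall S1 T' /\ separated T' /\ length T' = (2 * length T)%nat /\
    forall v, In v T' -> In (h v) T.
Proof.
  induction T as [|a T IH]; intros HS HT.
  - exists nil. repeat split; constructor || intros v [].
  - inversion HS as [|? ? Ha HST]; subst. inversion HT as [|? ? HaT HTT]; subst.
    destruct (IH HST HTT) as [T' [HS' [HT' [Hlen Hin]]]].
    destruct (Hsurj a Ha) as [u [Hu Hua]].
    assert (Hfar : forall w v, S1 w -> h w = a -> In v T' -> delta <= d w v).
    { intros w v Hw Hwa Hv. rewrite List.Forall_forall in HaT, HS'.
      pose proof (HaT _ (Hin v Hv)). pose proof (Hnonexp w v Hw (HS' v Hv)) as Hle.
      rewrite Hwa in Hle. lra. }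
    exists (u :: Copp u :: T'). repeat split.
    + repeat constructor; auto using S1_opp.
    + constructor; [|constructor]; [| |exact HT']; rewrite List.Forall_forall.
      * intros v [<-|Hv]; [apply Rlt_le, Hantipodal; auto|]. apply (Hfar u); auto.
      * intros v Hv. apply (Hfar (Copp u)); auto using S1_opp. rewrite Heven; auto.
    + simpl. rewrite Hlen. lia.
    + intros v [<-|[<-|Hv]]; [left; auto|left; rewrite Heven; auto|right; auto].
Qed.

Lemma separated_pow2 n : exists T, List.Forall S1 T /\ separated T /\ length T = (2 ^ n)%nat.
Proof.
  induction n as [|n [T [HS [HT Hlen]]]].
  - exists (cis 0 :: nil). repeat constructor. apply S1_cis.
  - destruct (separated_preimages T HS HT) as [T' [HS' [HT' [Hlen' _]]]].
    exists T'. repeat split; auto. rewrite Hlen', Hlen. simpl. lia.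
Qed.

(* Each delta/2-ball around a centre of c contains at most one point of a separated T. *)
Lemma separated_length_le_cover (T c : list C) : List.Forall S1 T -> separated T ->
  (forall w, In w c -> S1 w) -> (forall t, In t T -> exists w, In w c /\ d w t < delta / 2) ->
  (length T <= length c)%nat.
Proof.
  destruct Hmet as [_ [_ [Hsym Htri]]]. revert c.
  induction T as [|a T IH]; intros c HS HT Hc Hcov; [simpl; lia|].
  inversion HS as [|? ? Ha HST]; subst. inversion HT as [|? ? HaT HTT]; subst.
  destruct (Hcov a (or_introl eq_refl)) as [w [Hw Hwa]].
  destruct (in_split w c Hw) as [c1 [c2 ->]].
  assert (Hrest : (length T <= length (c1 ++ c2))%nat).
  { apply IH; auto.
    - intros w' Hw'. apply Hc, in_or_app. apply in_app_or in Hw'. simpl. tauto.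
    - intros t Ht. destruct (Hcov t (or_intror Ht)) as [w' [Hw' Hw't]].
      exists w'. split; auto.
      destruct (classic (w' = w)) as [->|Hne].
      + exfalso. rewrite List.Forall_forall in HaT, HST.
        assert (S1 w) by (apply Hc, in_or_app; simpl; auto).
        pose proof (HaT t Ht). pose proof (Htri a w t Ha ltac:(assumption) (HST t Ht)).
        rewrite (Hsym a w) in * by auto. lra.
      + apply in_app_or in Hw'. apply in_or_app. simpl in Hw'. destruct Hw' as [?|[?|?]]; auto.
        congruence. }
  rewrite length_app in *. simpl. lia.
Qed.
End TwoToOneNonexpanding.

Lemma Lip_gt_1_of_even_surjective h d : is_metric_on S1 d -> induces_std_topology S1 d ->
  (forall z, S1 z -> S1 (h z)) -> (forall z, h (Copp z) = h z) ->
  (forall w, S1 w -> exists u, S1 u /\ h u = w) -> Rbar_lt 1 (Lip S1 h d).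
Proof.
  intros Hmet Htop Hh Heven Hsurj.
  destruct (Rbar_lt_le_dec 1 (Lip S1 h d)) as [H|HLip]; [exact H|exfalso].
  pose proof (Lip_le_1_nonexpanding h d Hmet Hh HLip) as Hnonexp.
  destruct (antipodal_dist_lower_bound d Hmet Htop) as [delta [Hd Hanti]].
  destruct (S1_finite_cover (fun w z => d w z < delta / 2)) as [c [Hc Hcov]].
  { intros w Hw. apply (dist_small_near d Hmet Htop w (delta / 2) Hw). lra. }
  destruct (separated_pow2 h d Heven Hsurj Hnonexp delta Hanti (length c)) as [T [HS [HT Hlen]]].
  assert (Hle : (length T <= length c)%nat).
  { apply (separated_length_le_cover d Hmet delta T c HS HT Hc). intros t Ht.
    rewrite List.Forall_forall in HS. apply Hcov, HS, Ht. }
  pose proof (Nat.pow_gt_lin_r 2 (length c) ltac:(lia)). lia.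
Qed.

Theorem mainTheorem2 (alpha : R)
  (Hirr : ~ exists (p q : Z), q <> 0%Z /\ alpha / (2 * PI) = IZR p / IZR q) :
  (forall z, hutch alpha S1 z <-> S1 z) /\
  (forall K : C -> Prop, (forall z, K z -> S1 z) -> (exists z, K z) -> compactC K ->
     forall eps, 0 < eps -> exists N : nat, forall n, (N <= n)%nat ->
       hausdorff_dist (hutch_iter alpha n K) S1 < eps) /\
  (forall d : C -> C -> R, is_metric_on S1 d -> induces_std_topology S1 d ->
     Rbar_lt (Finite 1) (Lip S1 sqmap d) /\ Rbar_lt (Finite 1) (Lip S1 (gmap alpha) d)).
Proof.
  assert (Hirr' : irrational (alpha / (2 * PI))).
  { intros p q Hq E. apply Hirr. exists p, q. auto. }
  split; [exact (hutch_S1 alpha)|split].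
  -
    intros K HK Hne _. exact (hutch_iter_converges alpha Hirr' K HK Hne).
  - intros d Hmet Htop. split; apply Lip_gt_1_of_even_surjective; auto.
    + exact sqmap_S1.
    + exact sqmap_opp.
    + exact sqmap_surj.
    + exact (gmap_S1 alpha).
    + exact (gmap_opp alpha).
    + exact (gmap_surj alpha).
Qed.
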